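(* Let $G$ be a search game (as defined in the context) with ordinally consistent and solitary-search dominant payoffs. Then there exists a pure Nash equilibrium $s$ of $G$ that is socially optimal, i.e., $U(s)=U_{\mathrm{opt}}$.
   Context: A search game $G=(N,\Omega,\Pi,\mu,K,c,v)$ consists of: a finite set of players $N=\{1,\ldots,n\}$; a finite set $\Omega$ of locations; for each player $i$ a partition $\Pi_i$ of $\Omega$, with $\pi_i(\omega)$ the cell containing $\omega$; a common prior $\mu\in\Delta(\Omega)$ with $\mu(\pi_i)>0$ for every cell of every player, and $\mu(\omega|\pi_i)=\mu(\omega)/\mu(\pi_i)$ for $\omega\in\pi_i$; capacities $K_i\in\mathbb{N}$; costs $c_i:\{0,\ldots,K_i\}\to\mathbb{R}_{\ge0}$ with $c_i(0)=0$ and nondecreasing increments $c_i(k+1)-c_i(k)\ge c_i(k)-c_i(k-1)$; rewards $v_i^m(\omega)\ge0$ ($m$ = number of finders including $i$) with $v_i^{m+1}(\omega)\le v_i^m(\omega)$; social values $v_{\mathfrak{s}}(\omega)\ge0$. A pure strategy $s_i$ assigns to each cell $\pi_i$ a subset $s_i(\pi_i)\subseteq\pi_i$ of size at most $K_i$; $S$ is the set of pure profiles. With $m_s(\omega)=\sum_{i}\mathbf{1}_{\omega\in s_i(\pi_i(\omega))}$, player $i$'s payoff is $u_i(s)=\sum_{\omega}\mu(\omega)\big[\mathbf{1}_{\omega\in s_i(\pi_i(\omega))}v_i^{m_s(\omega)}(\omega)-c_i(|s_i(\pi_i(\omega))|)\big]$; a pure Nash equilibrium is a pure profile from which no player gains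 by a unilateral deviation to another pure strategy. The social payoff is $U(s)=\sum_{\omega}\mu(\omega)v_{\mathfrak{s}}(\omega)\mathbf{1}_{m_s(\omega)\ge1}$ and $U_{\mathrm{opt}}=\max_{s\in S}U(s)$. Payoffs are ordinally consistent if for every player $i$, every cell $\pi_i\in\Pi_i$ and all $\omega,\omega'\in\pi_i$: $\mu(\omega)v_i^1(\omega)<\mu(\omega')v_i^1(\omega')$ implies $\mu(\omega)v_{\mathfrak{s}}(\omega)\le\mu(\omega')v_{\mathfrak{s}}(\omega')$. Payoffs are solitary-search dominant if for every player $i$, every cell $\pi_i\in\Pi_i$ and all $\omega,\omega'\in\pi_i$: $\mu(\omega|\pi_i)v_i^1(\omega)\ge\mu(\omega'|\pi_i)v_i^2(\omega')$ and $\mu(\omega|\pi_i)v_i^1(\omega)\ge c_i(K_i)-c_i(K_i-1)$. *)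

From HB Require Import structures.
From mathcomp Require Import all_boot all_order all_algebra.
Set Implicit Arguments. Unset Strict Implicit. Unset Printing Implicit Defensive.
Import Order.TTheory GRing.Theory Num.Theory.
Local Open Scope ring_scope.

Record searchGame (R : realFieldType) (I Omega : finType) := SearchGame {
  part : I -> {set {set Omega}};
  part_ok : forall i, partition (part i) [set: Omega];
  mu : Omega -> R;
  mu_ge0 : forall w, 0 <= mu w;
  mu_sum1 : \sum_(w : Omega) mu w = 1;
  mu_cell_pos : forall i C, C \in part i -> 0 < \sum_(w in C) mu w;
  cap : I -> nat;
  cap_pos : forall i, (0 < cap i)%N;
  cost : I -> nat -> R;
  cost0 : forall i, cost i 0%N = 0;
  cost_ge0 : forall i k, (k <= cap i)%N -> 0 <= cost i k;
  cost_convex : forall i k, (0 < k)%N -> (k < cap i)%N ->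
      cost i k - cost i k.-1 <= cost i k.+1 - cost i k;
  (* rew i m w = v_i^m(w), m = number of finders (m >= 1) *)
  rew : I -> nat -> Omega -> R;
  rew_ge0 : forall i m w, (0 < m)%N -> 0 <= rew i m w;
  rew_noninc : forall i m w, (0 < m)%N -> rew i m.+1 w <= rew i m w;
  svalue : Omega -> R;
  svalue_ge0 : forall w, 0 <= svalue w
}.

Section Game.
Variables (R : realFieldType) (I Omega : finType) (G : searchGame R I Omega).

Definition cell (i : I) (w : Omega) : {set Omega} := pblock (part G i) w.

Definition mu_set (C : {set Omega}) : R := \sum_(w in C) mu G w.

Definition mu_cond (w : Omega) (C : {set Omega}) : R := mu G w / mu_set C.

(* A pure strategy of player i: to each cell, a subset of that cell of size <= K_i.
   (Values on non-cells are irrelevant.) *)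
Definition strategy := {set Omega} -> {set Omega}.
Definition profile := I -> strategy.

Definition valid_strategy (i : I) (si : strategy) : Prop :=
  forall C, C \in part G i -> si C \subset C /\ (#|si C| <= cap G i)%N.

Definition valid_profile (s : profile) : Prop :=
  forall i, valid_strategy i (s i).

Definition searches (s : profile) (i : I) (w : Omega) : bool :=
  w \in s i (cell i w).

Definition finders (s : profile) (w : Omega) : nat :=
  #|[set i | searches s i w]|.

Definition payoff (s : profile) (i : I) : R :=
  \sum_(w : Omega) mu G w *
    ((if searches s i w then rew G i (finders s w) w else 0)
     - cost G i #|s i (cell i w)|).

Definition social (s : profile) : R :=
  \sum_(w : Omega) mu G w * (if (0 < finders s w)%N then svalue G w else 0).

Definition deviate (s : profile) (i : I) (t : strategy) : profile :=
  fun j => if j == i then t else s j.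

Definition is_pure_NE (s : profile) : Prop :=
  valid_profile s /\
  forall i t, valid_strategy i t -> payoff (deviate s i t) i <= payoff s i.

Definition socially_optimal (s : profile) : Prop :=
  valid_profile s /\ forall t, valid_profile t -> social t <= social s.

Definition ordinally_consistent : Prop :=
  forall i C, C \in part G i -> forall w w', w \in C -> w' \in C ->
    mu G w * rew G i 1 w < mu G w' * rew G i 1 w' ->
    mu G w * svalue G w <= mu G w' * svalue G w'.

Definition solitary_search_dominant : Prop :=
  forall i C, C \in part G i -> forall w w', w \in C -> w' \in C ->
    mu_cond w' C * rew G i 2 w' <= mu_cond w C * rew G i 1 w /\
    cost G i (cap G i) - cost G i (cap G i).-1 <= mu_cond w C * rew G i 1 w.

End Game.

(* Start from a socially optimal assignment of locations to searchers in which
   no location is searched twice and which, among those, maximises the total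
   solitary gain.  Adding an uncovered location, or trading a searched location
   for it (ordinal consistency keeps this socially optimal), would raise that
   gain; so a player whose cell contains an uncovered location uses that cell to
   capacity, on locations of solitary gain at least as large.  With
   solitary-search dominance the assignment is then an equilibrium of the game
   in which each player's capacity in a cell is what it uses there.  Now raise
   these capacities one unit at a time.  After a raise the player may add a
   location, which only hurts the players already searching it; one of them then
   swaps it for a better location or drops it.  Along these better responses
   exactly one location carries one searcher too many, a potential strictly
   increases, and no location loses its last searcher, so coverage, hence social
   optimality, survives up to the true capacities.  There, convexity of costs
   makes the greedy choice in each cell a best response. *)

From Stdlib Require Import Classical FunctionalExtensionality.
From HB Require Import structures.
From mathcomp Require Import all_boot all_order all_algebra.
From mathcomp Require Import lra zify.
Import Order.TTheory GRing.Theory Num.Theory.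
Local Open Scope ring_scope.
Set Implicit Arguments. Unset Strict Implicit. Unset Printing Implicit Defensive.

Lemma exists_argmax (R : realFieldType) (T : finType) (A : {pred T}) (F : T -> R) x0 :
  x0 \in A -> exists2 x, x \in A & forall y, y \in A -> F y <= F x.
Proof. by move=> Ax0; case: (arg_maxP F Ax0) => x Ax maxx; exists x. Qed.

Section Greedy.
Variables (R : realFieldType) (T : finType).
Implicit Types (A C S : {set T}) (v : T -> R) (k : nat) (mc : nat -> R).

(* [mc t] is the cost of the [t]-th chosen element: [S] is a possible outcome of
   greedily choosing the most valuable elements of [C], at most [k] of them, as
   long as they pay for their cost. *)
Definition greedy C S v k mc := [/\ S \subset C, (#|S| <= k)%N,
  forall w w', w \in S -> w' \in C :\: S -> v w' <= v w,
  forall w, w \in S -> mc #|S| <= v w &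
  (#|S| < k)%N -> forall w', w' \in C :\: S -> v w' <= mc #|S|.+1].

Definition nondecreasing_upto k mc :=
  forall s t, (0 < s)%N -> (s <= t <= k)%N -> mc s <= mc t.

Lemma greedy_mono C S v v' k mc :
  (forall w, w \in S -> v w <= v' w) -> (forall w, w \in C :\: S -> v' w <= v w) ->
  greedy C S v k mc -> greedy C S v' k mc.
Proof.
move=> le_in le_out [sSC leSk v_top mc_in mc_out]; split=> //.
- move=> w w' wS w'CS.
  exact: le_trans (le_out _ w'CS) (le_trans (v_top _ _ wS w'CS) (le_in _ wS)).
- by move=> w wS; apply: le_trans (mc_in _ wS) (le_in _ wS).
- by move=> ltSk w' w'CS; apply: le_trans (le_out _ w'CS) (mc_out ltSk _ w'CS).
Qed.

Lemma greedy_grow C S v k mc : greedy C S v k mc ->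
  greedy C S v k.+1 mc \/ exists2 r, r \in C :\: S & greedy C (r |: S) v k.+1 mc.
Proof.
move=> [sSC leSk v_top mc_in mc_out].
have [ltSk | geSk] := ltnP #|S| k; first by left; split=> // [|_]; [exact: leqW | exact: mc_out].
have eSk : #|S| = k by apply/eqP; rewrite eqn_leq leSk geSk.
have [low | ] := boolP [forall w' in C :\: S, v w' <= mc #|S|.+1].
  by left; split=> // [|_ w' w'CS]; [exact: leqW | exact: (forall_inP low)].
rewrite negb_forall_in => /exists_inP[w0 w0CS]; rewrite -ltNge => high_w0.
have [r rCS rmax] := exists_argmax v w0CS.
have [rC rS] := setDP rCS.
have cardrS : #|r |: S| = k.+1 by rewrite cardsU1 rS eSk.
right; exists r => //; split; rewrite ?cardrS //.
- by rewrite subUset sub1set rC sSC.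
- move=> w w'; rewrite !inE => /orP[/eqP-> | wS] /andP[/norP[w'r w'S] w'C].
    by apply: rmax; rewrite inE w'S.
  by apply: v_top; rewrite ?inE ?w'S.
- move=> w; rewrite -eSk => /setU1P[-> | wS].
    exact: ltW (lt_le_trans high_w0 (rmax _ w0CS)).
  apply: ltW (lt_le_trans high_w0 (le_trans (rmax _ w0CS) (v_top _ _ wS rCS))).
- by rewrite ltnn.
Qed.

Section PerturbOneValue.
Variables (C S : {set T}) (v0 v : T -> R) (k : nat) (mc : nat -> R) (r : T).
Hypotheses (greedy_v0 : greedy C S v0 k mc) (rS : r \in S).
Hypothesis v_off_r : forall w, w \in C -> w != r -> v w = v0 w.

Let sSC : S \subset C. Proof. by case: greedy_v0. Qed.
Let v_in w : w \in S -> w != r -> v w = v0 w.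
Proof. by move=> wS; apply: v_off_r; apply: subsetP sSC w wS. Qed.
Let v_out w : w \in C :\: S -> v w = v0 w.
Proof. by case/setDP=> wC wS; apply: v_off_r => //; apply: contraNneq wS => ->. Qed.
Let cardS : #|S| = (#|S :\ r|).+1. Proof. by rewrite (cardsD1 r S) rS. Qed.

Lemma greedy_perturb_keep : mc #|S| <= v r ->
  (forall w', w' \in C :\: S -> v w' <= v r) -> greedy C S v k mc.
Proof.
case: greedy_v0 => _ leSk v0_top mc_in mc_out mc_r out_r; split=> //.
- move=> w w' wS w'CS; have [->|wr] := eqVneq w r; first exact: out_r.
  by rewrite (v_in wS wr) v_out //; apply: v0_top.
- by move=> w wS; have [->|wr] := eqVneq w r; last by rewrite v_in //; apply: mc_in.
- by move=> ltSk w' w'CS; rewrite v_out //; apply: mc_out.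
Qed.

Lemma greedy_perturb_drop : nondecreasing_upto k mc -> v r <= mc #|S| ->
  (forall w', w' \in C :\: S -> v w' <= mc #|S|) -> greedy C (S :\ r) v k mc.
Proof.
case: greedy_v0 => _ leSk v0_top mc_in mc_out mc_mono r_low out_low.
have CSr w' : w' \in C :\: (S :\ r) -> w' = r \/ w' \in C :\: S.
  by rewrite !inE negb_and negbK => /andP[/orP[/eqP->|w'S] w'C]; [left | right; rewrite w'S w'C].
split.
- exact: subset_trans (subsetDl S [set r]) sSC.
- by apply: leq_trans leSk; rewrite cardS.
- move=> w w' /setD1P[wr wS] /CSr[->|w'CS].
    by rewrite (v_in wS wr); apply: le_trans r_low (mc_in _ wS).
  by rewrite (v_in wS wr) v_out //; apply: v0_top.
- move=> w /setD1P[wr wS]; rewrite (v_in wS wr); apply: le_trans (mc_in _ wS).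
  apply: mc_mono; first by apply/card_gt0P; exists w; rewrite !inE wr.
  by rewrite leSk cardS leqnSn.
- by rewrite -cardS => _ w' /CSr[->|w'CS]; last exact: out_low.
Qed.

Lemma greedy_perturb_swap r' : r' \in C :\: S -> v r < v r' -> mc #|S| <= v r' ->
  (forall w', w' \in C :\: S -> v w' <= v r') -> greedy C (r' |: (S :\ r)) v k mc.
Proof.
case: greedy_v0 => _ leSk v0_top mc_in mc_out r'CS r_lt mc_r' r'max.
have [r'C r'S] := setDP r'CS.
have r'Sr : r' \notin S :\ r by rewrite inE negb_and r'S orbT.
have cardS' : #|r' |: (S :\ r)| = #|S| by rewrite cardsU1 r'Sr cardS.
have CS' w' : w' \in C :\: (r' |: (S :\ r)) -> w' = r \/ w' \in C :\: S.
  rewrite !inE negb_or negb_and negbK => /andP[/andP[_ /orP[/eqP->|w'S]] w'C].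
    by left.
  by right; rewrite w'S w'C.
split; rewrite ?cardS' //.
- by rewrite subUset sub1set r'C (subset_trans (subsetDl S [set r]) sSC).
- move=> w w' /setU1P[->|/setD1P[wr wS]] /CS'[->|w'CS]; first exact: ltW.
  + exact: r'max.
  + rewrite (v_in wS wr); apply: ltW (lt_le_trans r_lt _).
    by rewrite v_out //; apply: v0_top.
  + by rewrite (v_in wS wr) v_out //; apply: v0_top.
- by move=> w /setU1P[-> | /setD1P[wr wS]]; last by rewrite (v_in wS wr); apply: mc_in.
- move=> ltSk w' /CS'[->|w'CS]; last by rewrite v_out //; apply: mc_out.
  by apply: ltW (lt_le_trans r_lt _); rewrite v_out //; apply: mc_out.
Qed.

Lemma greedy_perturb : nondecreasing_upto k mc ->
  [\/ greedy C S v k mc,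
      exists r', [/\ r' \in C :\: S, v r < v r' & greedy C (r' |: (S :\ r)) v k mc]
    | greedy C (S :\ r) v k mc].
Proof.
move=> mc_mono.
have [|no_better] := boolP [exists w' in C :\: S, (v r < v w') && (mc #|S| <= v w')].
  case/exists_inP=> w0 w0CS /andP[r_lt0 mc_w0].
  have [r' r'CS r'max] := exists_argmax v w0CS.
  have r_lt : v r < v r' := lt_le_trans r_lt0 (r'max _ w0CS).
  apply: Or32; exists r'; split=> //; apply: greedy_perturb_swap => //.
  exact: le_trans mc_w0 (r'max _ w0CS).
have out_low w' : w' \in C :\: S -> v w' <= v r \/ v w' < mc #|S|.
  move=> w'CS; move: no_better; rewrite negb_exists_in => /forall_inP/(_ w' w'CS).
  by rewrite negb_and -leNgt -ltNge => /orP[]; [left | right].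
have [r_low | r_high] := ltP (v r) (mc #|S|).
  apply: Or33; apply: greedy_perturb_drop mc_mono (ltW r_low) _ => w' /out_low[] w'_low.
  - exact: ltW (le_lt_trans w'_low r_low).
  - exact: ltW.
apply: Or31; apply: greedy_perturb_keep => // w' /out_low[] // w'_low.
exact: ltW (lt_le_trans w'_low r_high).
Qed.
End PerturbOneValue.

Section GreedyOptimal.
Variables (C S : {set T}) (v : T -> R) (k : nat) (cc : nat -> R).
Let mc t := cc t - cc t.-1.
Hypotheses (greedy_S : greedy C S v k mc) (mc_mono : nondecreasing_upto k mc).
Let net (A : {set T}) := \sum_(w in A) v w - cc #|A|.
Let symd (A B : {set T}) := [set x | (x \in A) != (x \in B)].

Let card_symd_lt A (A' : {set T}) x : (forall y, y != x -> (y \in A') = (y \in A)) ->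
  (x \in A) != (x \in S) -> (x \in A') = (x \in S) -> (#|symd A' S| < #|symd A S|)%N.
Proof.
move=> A'A xA xA'; apply: proper_card; apply/properP; split.
  apply/subsetP => y; rewrite !inE; have [->|yx] := eqVneq y x; first by rewrite xA' eqxx.
  by rewrite A'A.
by exists x; rewrite !inE ?xA ?xA' ?eqxx.
Qed.

Let card_symd_setU1 A w : w \in S -> w \notin A -> (#|symd (w |: A) S| < #|symd A S|)%N.
Proof.
move=> wS /negbTE wA; apply: (card_symd_lt (x := w)); rewrite ?inE ?wA ?wS ?eqxx //.
by move=> y /negbTE yw; rewrite !inE yw.
Qed.

Let card_symd_setD1 A w' : w' \notin S -> w' \in A -> (#|symd (A :\ w') S| < #|symd A S|)%N.
Proof.
move=> /negbTE w'S w'A; apply: (card_symd_lt (x := w')); rewrite ?inE ?w'A ?w'S ?eqxx //.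
by move=> y yw'; rewrite !inE yw'.
Qed.

Let net_remove A w' : (#|S| < #|A| <= k)%N -> w' \in A -> w' \in C :\: S ->
  net A <= net (A :\ w').
Proof.
case: greedy_S => _ _ _ _ mc_out /andP[ltSA leAk] w'A w'CS.
have cardA : #|A| = (#|A :\ w'|).+1 by rewrite (cardsD1 w' A) w'A.
have w'_low : v w' <= mc #|A|.
  apply: le_trans (mc_out (leq_trans ltSA leAk) _ w'CS) _.
  by apply: mc_mono; rewrite // ltSA leAk.
rewrite /net (big_setD1 w' w'A) /= cardA; rewrite /mc cardA /= in w'_low; lra.
Qed.

Let net_add A w : (#|A| < #|S|)%N -> w \in S -> w \notin A -> net A <= net (w |: A).
Proof.
case: greedy_S => _ leSk _ mc_in _ ltAS wS wA.
have w_high : mc #|A|.+1 <= v w.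
  by apply: le_trans (mc_in _ wS); apply: mc_mono; rewrite // ltAS leSk.
rewrite /net (big_setU1 _ wA) cardsU1 wA /=; rewrite /mc /= in w_high; lra.
Qed.

Let net_swap A w w' : w \in S -> w \notin A -> w' \in A -> w' \in C :\: S ->
  net A <= net (w |: (A :\ w')).
Proof.
case: greedy_S => _ _ v_top _ _ wS wA w'A w'CS.
have wAw' : w \notin A :\ w' by rewrite inE negb_and wA orbT.
rewrite /net (big_setU1 _ wAw') cardsU1 wAw' (big_setD1 w' w'A) (cardsD1 w' A) w'A /=.
by have := v_top _ _ wS w'CS; lra.
Qed.

Let net_improve A : A \subset C -> (#|A| <= k)%N -> A != S ->
  exists A', [/\ A' \subset C, (#|A'| <= k)%N, (#|symd A' S| < #|symd A S|)%N & net A <= net A'].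
Proof.
case: (greedy_S) => sSC leSk _ _ _ sAC leAk neqAS.
have sA_C w' : w' \in A -> w' \in C := subsetP sAC w'.
have sAw'C w' : A :\ w' \subset C := subset_trans (subsetDl A [set w']) sAC.
have [ltSA | leAS] := ltnP #|S| #|A|.
  have /subsetPn[w' w'A w'S] : ~~ (A \subset S).
    by apply: contraL ltSA => /subset_leq_card; rewrite -leqNgt.
  exists (A :\ w'); split; rewrite ?card_symd_setD1 //.
  - by apply: leq_trans leAk; apply: subset_leq_card; apply: subsetDl.
  - by apply: net_remove; rewrite ?ltSA ?leAk // inE w'S sA_C.
have /subsetPn[w wS wA] : ~~ (S \subset A).
  by apply: contra neqAS => sSA; rewrite eq_sym eqEcard sSA leAS.
have wC : w \in C := subsetP sSC w wS.
have [ltAS | geAS] := ltnP #|A| #|S|.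
  exists (w |: A); split; rewrite ?card_symd_setU1 ?net_add //.
  - by rewrite subUset sub1set wC sAC.
  - by rewrite cardsU1 wA; apply: leq_trans leSk.
have /subsetPn[w' w'A w'S] : ~~ (A \subset S).
  by apply: contra neqAS => sAS; rewrite eqEcard sAS geAS.
have wAw' : w \notin A :\ w' by rewrite inE negb_and wA orbT.
exists (w |: (A :\ w')); split.
- by rewrite subUset sub1set wC sAw'C.
- by rewrite cardsU1 wAw' (cardsD1 w' A) w'A in leAk *.
- exact: ltn_trans (card_symd_setU1 wS wAw') (card_symd_setD1 w'S w'A).
- by apply: net_swap; rewrite // inE w'S sA_C.
Qed.

Lemma greedy_optimal A : A \subset C -> (#|A| <= k)%N ->
  \sum_(w in A) v w - cc #|A| <= \sum_(w in S) v w - cc #|S|.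
Proof.
move Hn : #|symd A S| => n; elim/ltn_ind: n A Hn => n IH A Hn sAC leAk.
have [-> // | neqAS] := eqVneq A S.
have [A' [sA'C leA'k lt_symd le_net]] := net_improve sAC leAk neqAS.
by apply: le_trans le_net (IH _ _ A' erefl sA'C leA'k); rewrite -Hn.
Qed.
End GreedyOptimal.
End Greedy.

Section SearchGame.
Variables (R : realFieldType) (I Omega : finType) (G : searchGame R I Omega).
Implicit Types (i j : I) (w : Omega) (C S : {set Omega}).

Lemma cover_part i : cover (part G i) = [set: Omega].
Proof. exact: cover_partition (part_ok G i). Qed.

Lemma mem_cell i w : w \in cell G i w.
Proof. by rewrite /cell mem_pblock cover_part inE. Qed.

Lemma cell_eq i C w : C \in part G i -> w \in C -> cell G i w = C.
Proof. by move=> CP wC; apply: def_pblock => //; apply: partition_trivIset (part_ok G i). Qed.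

Lemma part_inj i C C' w : C \in part G i -> C' \in part G i -> w \in C -> w \in C' -> C = C'.
Proof. by move=> CP C'P wC wC'; rewrite -(cell_eq CP wC) (cell_eq C'P wC'). Qed.

Lemma sum_cells i (F : Omega -> R) :
  \sum_w F w = \sum_(C in part G i) \sum_(w in C) F w.
Proof. by rewrite -(set_partition_big _ (part_ok G i)); apply: eq_bigl => w; rewrite inE. Qed.

Definition gain i m w := mu G w * rew G i m w.

Lemma gain_ge0 i m w : (0 < m)%N -> 0 <= gain i m w.
Proof. by move=> m_gt0; rewrite mulr_ge0 ?mu_ge0 ?rew_ge0. Qed.

Lemma gain_antimono i w m n : (0 < m)%N -> (m <= n)%N -> gain i n w <= gain i m w.
Proof.
move=> m_gt0; elim: n => [|n IH]; first by rewrite leqn0 => /eqP m0; rewrite m0 in m_gt0.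
rewrite leq_eqVlt => /orP[/eqP<- // | lt_mn]; apply: le_trans (IH lt_mn).
by rewrite ler_wpM2l ?mu_ge0 ?rew_noninc ?(leq_trans m_gt0 lt_mn).
Qed.

Definition cell_cost i C t := mu_set G C * cost G i t.
Definition marg_cost i C t := cell_cost i C t - cell_cost i C t.-1.

Lemma marg_cost_mono i C k : C \in part G i -> (k <= cap G i)%N ->
  nondecreasing_upto k (marg_cost i C).
Proof.
move=> CP le_k s t s_gt0; elim: t => [|t IH].
  by rewrite leqn0 => /andP[/eqP s0]; rewrite s0 in s_gt0.
rewrite leq_eqVlt ltnS => /andP[/orP[/eqP<- // | le_st] lt_tk].
apply: le_trans (IH _) _; first by rewrite le_st ltnW.
rewrite /marg_cost /cell_cost -!mulrBr ler_wpM2l ?(ltW (mu_cell_pos CP)) //.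
exact: cost_convex (leq_trans s_gt0 le_st) (leq_trans lt_tk le_k).
Qed.

Lemma solitary_gain i C w w' : solitary_search_dominant G -> C \in part G i ->
  w \in C -> w' \in C ->
  gain i 2 w' <= gain i 1 w /\ marg_cost i C (cap G i) <= gain i 1 w.
Proof.
move=> ssd CP wC w'C; have [le_2_1 le_cost] := ssd i C CP w w' wC w'C.
have muC_gt0 : 0 < mu_set G C := mu_cell_pos CP.
have gainE m x : gain i m x = mu_set G C * (mu_cond G x C * rew G i m x).
  by rewrite /mu_cond mulrA mulrCA divff ?mulr1 // gt_eqF.
by rewrite !gainE /marg_cost /cell_cost -mulrBr !ler_pM2l.
Qed.

Definition assignment := {ffun I -> {set Omega}}.
Implicit Types (X Y : assignment) (k : I -> {set Omega} -> nat).

Definition load X w := #|[set j | w \in X j]|.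
Definition others X i w := #|[set j | (j != i) && (w \in X j)]|.
Definition worth X i w := gain i (others X i w).+1 w.
Definition reassign X i S : assignment := [ffun j => if j == i then S else X j].

Lemma card_split_at (P : pred I) i :
  #|[set j | P j]| = (P i + #|[set j | (j != i) && P j]|)%N.
Proof. by rewrite (cardsD1 i) inE; congr (_ + _)%N; apply: eq_card => j; rewrite !inE. Qed.

Lemma load_others X i w : load X w = (others X i w + (w \in X i))%N.
Proof. by rewrite /load (card_split_at _ i) addnC. Qed.

Lemma load0P X w : reflect (forall j, w \notin X j) (load X w == 0%N).
Proof.
rewrite cards_eq0; apply: (iffP eqP) => [load0 j | notin].
  by apply/negP => wj; have := in_set0 j; rewrite -load0 inE wj.
by apply/setP => j; rewrite !inE (negbTE (notin j)).
Qed.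

Lemma reassign_self X i S : reassign X i S i = S.
Proof. by rewrite ffunE eqxx. Qed.

Lemma reassign_other X i S j : j != i -> reassign X i S j = X j.
Proof. by move=> ji; rewrite ffunE (negbTE ji). Qed.

Lemma others_reassign X i S w : others (reassign X i S) i w = others X i w.
Proof.
apply: eq_card => j; rewrite !inE; have [//|ji] := eqVneq j i.
by rewrite reassign_other.
Qed.

Lemma worth_reassign X i S : worth (reassign X i S) i =1 worth X i.
Proof. by move=> w; rewrite /worth others_reassign. Qed.

Lemma load_reassign X i S w : load (reassign X i S) w = (others X i w + (w \in S))%N.
Proof. by rewrite (load_others _ i) others_reassign reassign_self. Qed.

Lemma sum_reassign (F : I -> Omega -> R) X i S :
  \sum_j \sum_(w in reassign X i S j) F j w =
  \sum_j \sum_(w in X j) F j w - \sum_(w in X i) F i w + \sum_(w in S) F i w.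
Proof.
rewrite (bigD1 i) //= [in RHS](bigD1 i) //= reassign_self.
rewrite (eq_bigr (fun j => \sum_(w in X j) F j w)) => [|j ji]; last by rewrite reassign_other.
lra.
Qed.

Definition profile_of X : profile I Omega := fun i C => X i :&: C.
Definition assignment_of (s : profile I Omega) : assignment :=
  [ffun i => [set w | searches G s i w]].
Definition feasible X := [forall i, forall C in part G i, #|X i :&: C| <= cap G i]%N.

Lemma feasibleP X :
  reflect (forall i C, C \in part G i -> #|X i :&: C| <= cap G i)%N (feasible X).
Proof.
apply: (iffP forallP) => [feas i C CP | feas i]; first exact: (forall_inP (feas i)).
by apply/forall_inP; apply: feas.
Qed.

Lemma searches_profile_of X i w : searches G (profile_of X) i w = (w \in X i).
Proof. by rewrite /searches /profile_of inE mem_cell andbT. Qed.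

Lemma finders_profile_of X w : finders G (profile_of X) w = load X w.
Proof. by apply: eq_card => j; rewrite !inE searches_profile_of. Qed.

Lemma finders_assignment_of s w : finders G s w = load (assignment_of s) w.
Proof. by apply: eq_card => j; rewrite !inE ffunE inE. Qed.

Lemma valid_profile_of X : feasible X -> valid_profile G (profile_of X).
Proof. by move=> /feasibleP feas i C CP; split; [apply: subsetIr | apply: feas]. Qed.

Lemma feasible_assignment_of s : valid_profile G s -> feasible (assignment_of s).
Proof.
move=> valid; apply/feasibleP => i C CP; have [_ leC] := valid i C CP.
apply: leq_trans leC; apply: subset_leq_card; apply/subsetP => w.
by rewrite ffunE !inE /searches => /andP[sw wC]; rewrite (cell_eq CP wC) in sw.
Qed.

Lemma feasible_reassign X i S : feasible X ->
  (forall C, C \in part G i -> #|S :&: C| <= cap G i)%N -> feasible (reassign X i S).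
Proof.
move=> /feasibleP feas feasS; apply/feasibleP => j C.
have [->|ji] := eqVneq j i; first by rewrite reassign_self; apply: feasS.
by rewrite reassign_other //; apply: feas.
Qed.

Lemma social_le s t :
  (forall w, 0 < finders G s w -> 0 < finders G t w)%N -> social G s <= social G t.
Proof.
move=> cov; apply: ler_sum => w _; case: ifP => [/cov -> // | _].
by case: ifP; rewrite ?mulr0 // mulr_ge0 ?mu_ge0 ?svalue_ge0.
Qed.

Definition covered X := [set w | 0 < load X w]%N.

Lemma social_profile_of X :
  social G (profile_of X) = \sum_(w in covered X) mu G w * svalue G w.
Proof.
rewrite /social [RHS]big_mkcond; apply: eq_bigr => w _.
by rewrite finders_profile_of inE; case: ifP; rewrite ?mulr0.
Qed.

Definition greedy_at k (val : I -> Omega -> R) X i C :=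
  greedy C (X i :&: C) (val i) (k i C) (marg_cost i C).
Definition capped_NE k X := forall i C, C \in part G i -> greedy_at k (worth X) X i C.

Lemma deviate_self (s : profile I Omega) i : deviate s i (s i) = s.
Proof. by apply: functional_extensionality => j; rewrite /deviate; case: eqP => // ->. Qed.

Lemma finders_deviate_profile_of X i (t : strategy Omega) w :
  finders G (deviate (profile_of X) i t) w = (others X i w + (w \in t (cell G i w)))%N.
Proof.
rewrite /finders (card_split_at _ i) addnC {2}/searches /deviate eqxx; congr (_ + _)%N.
apply: eq_card => j; rewrite !inE; have [//|ji] := eqVneq j i.
by rewrite /searches /deviate (negbTE ji) /profile_of inE mem_cell andbT.
Qed.

Lemma payoff_deviate_profile_of X i (t : strategy Omega) :
  (forall C, C \in part G i -> t C \subset C) ->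
  payoff G (deviate (profile_of X) i t) i =
  \sum_(C in part G i) (\sum_(w in t C) worth X i w - cell_cost i C #|t C|).
Proof.
move=> sub_t; rewrite /payoff (sum_cells i); apply: eq_bigr => C CP.
rewrite (eq_bigr (fun w => (if w \in t C then worth X i w else 0)
                           - mu G w * cost G i #|t C|)); last first.
  move=> w wC; rewrite finders_deviate_profile_of /searches /deviate eqxx (cell_eq CP wC).
  by rewrite mulrBr; case: ifP => wt; rewrite ?mulr0 // wt addn1.
rewrite sumrB -big_mkcondr /= /cell_cost /mu_set mulr_suml; congr (_ - _).
by apply: eq_bigl => w; rewrite andb_idl // => /(subsetP (sub_t C CP)).
Qed.

Lemma is_pure_NE_profile_of X :
  capped_NE (fun i _ => cap G i) X -> is_pure_NE G (profile_of X).
Proof.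
move=> NE; have feas : feasible X by apply/feasibleP => i C /NE[].
split=> [|i t valid_t]; first exact: valid_profile_of.
rewrite -{2}(deviate_self (profile_of X) i) !payoff_deviate_profile_of => [|C _|C CP];
  [|exact: subsetIr|by case: (valid_t C CP)].
apply: ler_sum => C CP; have [sub_tC le_tC] := valid_t C CP.
exact: greedy_optimal (NE i C CP) (marg_cost_mono CP (leqnn _)) _ sub_tC le_tC.
Qed.

Lemma greedy_at_transfer k (val val' : I -> Omega -> R) X Y i C :
  (forall w, w \in C -> (w \in Y i) = (w \in X i)) ->
  (forall w, w \in X i :&: C -> val i w <= val' i w) ->
  (forall w, w \in C :\: (X i :&: C) -> val' i w <= val i w) ->
  greedy_at k val X i C -> greedy_at k val' Y i C.
Proof.
move=> sameC le_in le_out; rewrite /greedy_at.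
have -> : Y i :&: C = X i :&: C.
  by apply/setP => w; rewrite !inE; case: (boolP (w \in C)) => [/sameC->|]; rewrite ?andbF.
exact: greedy_mono.
Qed.

(* [base_worth orig X i w] is the worth of [w] to [i] if the load of [w] were
   [orig w]; under [excess_at orig X r] it is the true worth except at [r]. *)
Definition base_worth (orig : Omega -> nat) X i w := gain i (orig w - (w \in X i)).+1 w.
Definition excess_at orig X r := forall w, load X w = (orig w + (w == r))%N.
Definition almost_NE k orig X r := excess_at orig X r /\
  forall i C, C \in part G i -> greedy_at k (base_worth orig X) X i C.
(* Swapping the excess location [r] for [r'] raises the potential by exactly the
   difference of their worths. *)
Definition potential (orig : Omega -> nat) X := \sum_i \sum_(w in X i) gain i (orig w).+1 w.
Definition below_cap k := forall i C, C \in part G i -> (k i C <= cap G i)%N.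

Lemma base_worthE orig X i w : load X w = orig w -> base_worth orig X i w = worth X i w.
Proof. by rewrite /base_worth (load_others X i) => <-; rewrite addnK. Qed.

Lemma worth_le_base_worth orig X i w :
  load X w = (orig w).+1 -> worth X i w <= base_worth orig X i w.
Proof. by rewrite (load_others X i) => load_w; apply: gain_antimono => //; lia. Qed.

Lemma greedy_at_worth_of_base k orig X r i C : excess_at orig X r -> r \notin X i :&: C ->
  greedy_at k (base_worth orig X) X i C -> greedy_at k (worth X) X i C.
Proof.
move=> ex rXC; apply: greedy_at_transfer => // w.
  move=> wXC; rewrite base_worthE // ex; suff /negbTE-> : w != r by rewrite addn0.
  by apply: contraNneq rXC => <-.
move=> _; have [-> | /negbTE wr] := eqVneq w r.
  by apply: worth_le_base_worth; rewrite ex eqxx addn1.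
by rewrite base_worthE // ex wr addn0.
Qed.

Lemma greedy_at_base_of_worth k orig X r i C : excess_at orig X r -> (r \in C -> r \in X i) ->
  greedy_at k (worth X) X i C -> greedy_at k (base_worth orig X) X i C.
Proof.
move=> ex rCX; apply: greedy_at_transfer => // w.
  move=> _; have [-> | /negbTE wr] := eqVneq w r.
    by apply: worth_le_base_worth; rewrite ex eqxx addn1.
  by rewrite base_worthE // ex wr addn0.
move=> /setDP[wC]; rewrite inE wC andbT => wX.
have /negbTE wr : w != r by apply: contraNneq wX => wr; rewrite wr rCX -?wr.
by rewrite base_worthE // ex wr addn0.
Qed.

Lemma reassign_agree X i S C j C' : C \in part G i -> C' \in part G j -> (j, C') != (i, C) ->
  (forall w, w \notin C -> (w \in S) = (w \in X i)) ->
  forall w, w \in C' -> (w \in reassign X i S j) = (w \in X j).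
Proof.
move=> CP C'P ne agree w wC'; have [eji | ji] := eqVneq j i; last by rewrite reassign_other.
subst j; rewrite reassign_self agree //; apply/negP => wC.
by move: ne; rewrite (part_inj CP C'P wC wC') eqxx.
Qed.

Lemma greedy_at_base_reassign k orig X i S j C' :
  (forall w, w \in C' -> (w \in reassign X i S j) = (w \in X j)) ->
  greedy_at k (base_worth orig X) X j C' ->
  greedy_at k (base_worth orig (reassign X i S)) (reassign X i S) j C'.
Proof.
by move=> agree; apply: greedy_at_transfer => // w; rewrite inE /base_worth => /andP[_ /agree->].
Qed.

Lemma excess_swap orig X r i r' : excess_at orig X r -> r \in X i -> r' \notin X i ->
  excess_at orig (reassign X i (r' |: (X i :\ r))) r'.
Proof.
move=> ex rX r'X w; move: (ex w); rewrite load_reassign (load_others X i) !inE.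
have /negbTE r'r : r' != r by apply: contraNneq r'X => ->.
have [-> | _] := eqVneq w r'; first by rewrite r'r (negbTE r'X) /=; lia.
by have [-> | _] := eqVneq w r; rewrite ?rX /=; lia.
Qed.

Lemma load_drop orig X r i : excess_at orig X r -> r \in X i ->
  forall w, load (reassign X i (X i :\ r)) w = orig w.
Proof.
move=> ex rX w; move: (ex w); rewrite load_reassign (load_others X i) !inE.
by have [-> | _] := eqVneq w r; rewrite ?rX /=; lia.
Qed.

Lemma excess_add X i r : r \notin X i -> excess_at (load X) (reassign X i (r |: X i)) r.
Proof.
move=> rX w; rewrite load_reassign (load_others X i) !inE.
by have [-> | _] := eqVneq w r; rewrite ?(negbTE rX) /=; lia.
Qed.

Section Cascade.
Variables (k : I -> {set Omega} -> nat) (orig : Omega -> nat).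
Hypothesis k_below : below_cap k.

Lemma almost_NE_swap X r i C r' : almost_NE k orig X r -> C \in part G i ->
  r \in X i :&: C -> r' \in C :\: (X i :&: C) -> worth X i r < worth X i r' ->
  greedy C (r' |: (X i :&: C :\ r)) (worth X i) (k i C) (marg_cost i C) ->
  exists Y, almost_NE k orig Y r' /\ potential orig X < potential orig Y.
Proof.
move=> [ex gr] CP /setIP[rX rC] /setDP[r'C r'XC] lt_r_r' gr'.
have r'X : r' \notin X i by apply: contra r'XC => r'X; rewrite inE r'X.
have exY := excess_swap ex rX r'X.
exists (reassign X i (r' |: (X i :\ r))); split.
  split=> // j C' C'P; have [[-> ->] | ne] := eqVneq (j, C') (i, C).
    apply: (greedy_at_base_of_worth exY) => [_|]; first by rewrite reassign_self !inE eqxx.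
    rewrite /greedy_at reassign_self.
    have -> : (r' |: (X i :\ r)) :&: C = r' |: (X i :&: C :\ r).
      by apply/setP => w; rewrite !inE; have [->|_] := eqVneq w r'; rewrite /= ?r'C ?andbA.
    by apply: greedy_mono gr' => w _; rewrite worth_reassign.
  apply: greedy_at_base_reassign (gr j C' C'P); apply: (reassign_agree CP C'P ne) => w wC.
  have /negbTE wr' : w != r' by apply: contraNneq wC => ->.
  have wr : w != r by apply: contraNneq wC => ->.
  by rewrite !inE wr' wr.
have /negbTE r'r : r' != r by apply: contraNneq r'X => ->.
have others_r : others X i r = orig r by move: (ex r); rewrite (load_others X i) rX eqxx; lia.
have others_r' : others X i r' = orig r'.
  by move: (ex r'); rewrite (load_others X i) (negbTE r'X) r'r; lia.
have r'Xr : r' \notin X i :\ r by rewrite inE negb_and r'X orbT.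
rewrite /potential sum_reassign (big_setU1 _ r'Xr) (big_setD1 r rX) /=.
by move: lt_r_r'; rewrite /worth others_r others_r'; lra.
Qed.

Lemma almost_NE_drop X r i C : almost_NE k orig X r -> C \in part G i -> r \in X i :&: C ->
  greedy C (X i :&: C :\ r) (worth X i) (k i C) (marg_cost i C) ->
  exists Y, capped_NE k Y /\ forall w, load Y w = orig w.
Proof.
move=> [ex gr] CP /setIP[rX rC] gr'.
have loadY := load_drop ex rX.
exists (reassign X i (X i :\ r)); split=> // j C' C'P.
have [[-> ->] | ne] := eqVneq (j, C') (i, C).
  rewrite /greedy_at reassign_self setIDAC.
  by apply: greedy_mono gr' => w _; rewrite worth_reassign.
have agree w : w \in C' -> (w \in reassign X i (X i :\ r) j) = (w \in X j).
  apply: (reassign_agree CP C'P ne) => {}w wC.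
  have wr : w != r by apply: contraNneq wC => ->.
  by rewrite !inE wr.
by apply: greedy_at_transfer (greedy_at_base_reassign agree (gr j C' C'P)) => // w _;
  rewrite base_worthE.
Qed.

Lemma almost_NE_step X r : almost_NE k orig X r ->
  [\/ capped_NE k X,
      exists Y r', almost_NE k orig Y r' /\ potential orig X < potential orig Y
    | exists Y, capped_NE k Y /\ forall w, load Y w = orig w].
Proof.
move=> [ex gr].
have [[i [C [CP unstable]]] | all_stable] :=
  classic (exists i C, C \in part G i /\ ~ greedy_at k (worth X) X i C); last first.
  by apply: Or31 => i C CP; apply: NNPP => unstable; apply: all_stable; exists i, C.
have rXC : r \in X i :&: C.
  by apply/negPn/negP => rXC; apply/unstable/(greedy_at_worth_of_base ex rXC)/gr.
have worth_off_r w : w \in C -> w != r -> worth X i w = base_worth orig X i w.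
  by move=> _ /negbTE wr; rewrite base_worthE // ex wr addn0.
case: (greedy_perturb (gr i C CP) rXC worth_off_r (marg_cost_mono CP (k_below CP)))
  => [stable | [r' [r'out lt gr']] | gr'].
- by case: unstable.
- by apply: Or32; have [Y ?] := almost_NE_swap (conj ex gr) CP rXC r'out lt gr'; exists Y, r'.
- by apply: Or33; apply: almost_NE_drop (conj ex gr) CP rXC gr'.
Qed.

Lemma cascade X r : almost_NE k orig X r ->
  exists Y, capped_NE k Y /\ forall w, (orig w <= load Y w)%N.
Proof.
move Hn : #|[set Y | potential orig X < potential orig Y]| => n.
elim/ltn_ind: n X r Hn => n IH X r Hn almost.
case: (almost_NE_step almost) => [NE | [Y [r' [almostY lt_XY]]] | [Y [NEY loadY]]].
- by exists X; split=> // w; rewrite (almost.1 w) leq_addr.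
- apply: (IH _ _ Y r' erefl almostY); rewrite -Hn; apply: proper_card; apply/properP; split.
    by apply/subsetP => Z; rewrite !inE; apply: lt_trans.
  by exists Y; rewrite !inE ?lt_XY ?ltxx.
- by exists Y; split=> // w; rewrite loadY.
Qed.
End Cascade.

Definition bump k i C : I -> {set Omega} -> nat :=
  fun j C' => (k j C' + ((j, C') == (i, C)))%N.
Definition slack k :=
  (\sum_(p : I * {set Omega} | p.2 \in part G p.1) (cap G p.1 - k p.1 p.2))%N.

Lemma bump_self k i C : bump k i C i C = (k i C).+1.
Proof. by rewrite /bump eqxx addn1. Qed.

Lemma bump_other k i C j C' : (j, C') != (i, C) -> bump k i C j C' = k j C'.
Proof. by move=> /negbTE ne; rewrite /bump ne addn0. Qed.

Lemma below_cap_bump k i C : below_cap k -> (k i C < cap G i)%N -> below_cap (bump k i C).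
Proof.
move=> k_below lt j C' C'P; have [[-> ->] | ne] := eqVneq (j, C') (i, C).
  by rewrite bump_self.
by rewrite bump_other ?k_below.
Qed.

Lemma slack_bump k i C : C \in part G i -> (k i C < cap G i)%N ->
  (slack (bump k i C) < slack k)%N.
Proof.
move=> CP lt; rewrite /slack (bigD1 (i, C)) //= [X in (_ < X)%N](bigD1 (i, C)) //= bump_self.
rewrite (eq_bigr (fun p => cap G p.1 - k p.1 p.2)%N) => [|[j C'] /andP[_ ne]].
  by rewrite ltn_add2r; lia.
by rewrite bump_other.
Qed.

Lemma greedy_at_base_load k X j C :
  greedy_at k (worth X) X j C -> greedy_at k (base_worth (load X) X) X j C.
Proof. by apply: greedy_at_transfer => // w _; rewrite base_worthE. Qed.

Lemma capped_NE_bump k X i C : below_cap k -> C \in part G i -> (k i C < cap G i)%N ->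
  capped_NE k X -> exists Y, capped_NE (bump k i C) Y /\ forall w, (load X w <= load Y w)%N.
Proof.
move=> k_below CP lt NE; have [gr | [r0 r0out gr]] := greedy_grow (NE i C CP).
  exists X; split=> // j C' C'P; have [[-> ->] | ne] := eqVneq (j, C') (i, C).
    by rewrite /greedy_at bump_self.
  by rewrite /greedy_at bump_other //; apply: NE.
have [r0C r0XC] := setDP r0out.
have r0X : r0 \notin X i by apply: contra r0XC => r0X; rewrite inE r0X.
apply: (cascade (below_cap_bump k_below lt) (conj (excess_add r0X) _)) => j C' C'P.
have [[-> ->] | ne] := eqVneq (j, C') (i, C).
  apply: (greedy_at_base_of_worth (excess_add r0X)) => [_|].
    by rewrite reassign_self setU11.
  rewrite /greedy_at bump_self reassign_self.
  have -> : (r0 |: X i) :&: C = r0 |: (X i :&: C).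
    by apply/setP => w; rewrite !inE; have [->|_] := eqVneq w r0; rewrite /= ?r0C.
  by apply: greedy_mono gr => w _; rewrite worth_reassign.
rewrite /greedy_at bump_other //.
apply: greedy_at_base_reassign (greedy_at_base_load (NE j C' C'P)).
apply: (reassign_agree CP C'P ne) => w wC; have wr0 : w != r0 by apply: contraNneq wC => ->.
by rewrite !inE (negbTE wr0).
Qed.

Lemma capped_NE_raise k X : below_cap k -> capped_NE k X ->
  exists Y, capped_NE (fun i _ => cap G i) Y /\ forall w, (load X w <= load Y w)%N.
Proof.
move Hn : (slack k) => n; elim/ltn_ind: n k X Hn => n IH k X Hn k_below NE.
case: (pickP [pred p : I * {set Omega} | (p.2 \in part G p.1) && (k p.1 p.2 < cap G p.1)%N]).
  move=> [i C] /andP[/= CP lt].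
  have [Y [NEY le_XY]] := capped_NE_bump k_below CP lt NE.
  have lt_n : (slack (bump k i C) < n)%N by rewrite -Hn slack_bump.
  have [Z [NEZ le_YZ]] := IH _ lt_n _ _ erefl (below_cap_bump k_below lt) NEY.
  by exists Z; split=> // w; apply: leq_trans (le_XY w) (le_YZ w).
move=> full; exists X; split=> // i C CP.
rewrite /greedy_at; have /eqP <- : k i C == cap G i.
  by rewrite eqn_leq k_below //= leqNgt; move: (full (i, C)); rewrite /= CP /= => ->.
exact: NE.
Qed.

Definition exclusive X := [forall w, load X w <= 1]%N.

Lemma exclusive_others X i w : exclusive X -> w \in X i -> others X i w = 0%N.
Proof. by move=> /forallP/(_ w); rewrite (load_others X i) => le1 wX; rewrite wX in le1; lia. Qed.

Lemma exclusive_reassign X i S : exclusive X ->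
  (forall w, w \in S -> w \in X i \/ load X w = 0%N) -> exclusive (reassign X i S).
Proof.
move=> /forallP excl newS; apply/forallP => w; rewrite load_reassign.
have := excl w; rewrite (load_others X i).
case: (boolP (w \in S)) => [/newS[-> // | ] | _] /=; last by lia.
by rewrite (load_others X i); lia.
Qed.

Definition exclusive_core X : assignment :=
  [ffun i => [set w in X i | [pick j | w \in X j] == Some i]].

Lemma exclusive_coreP X : exclusive (exclusive_core X).
Proof.
apply/forallP => w; case E: [pick j | w \in X j] => [j0|].
  rewrite -(cards1 j0); apply: subset_leq_card; apply/subsetP => j.
  by rewrite !inE ffunE inE E => /andP[_ /eqP[->]].
rewrite leqW // leqn0 cards_eq0; apply/eqP/setP => j.
by rewrite !inE ffunE inE E andbF.
Qed.

Lemma feasible_exclusive_core X : feasible X -> feasible (exclusive_core X).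
Proof.
move=> /feasibleP feas; apply/feasibleP => i C CP; apply: leq_trans (feas i C CP).
by apply: subset_leq_card; apply: setSI; apply/subsetP => w; rewrite ffunE inE => /andP[].
Qed.

Lemma load_exclusive_core X w : (0 < load X w)%N -> (0 < load (exclusive_core X) w)%N.
Proof.
move=> /card_gt0P[j]; rewrite inE => wj.
case E: [pick j | w \in X j] => [j0|]; last by move: E; case: pickP => // /(_ j); rewrite wj.
apply/card_gt0P; exists j0; rewrite !inE ffunE inE E eqxx andbT.
by move: E; case: pickP => // j1 wj1 [<-].
Qed.

Lemma exists_optimal_exclusive : exists O, [/\ feasible O, exclusive O &
  forall Y, feasible Y -> social G (profile_of Y) <= social G (profile_of O)].
Proof.
have feas0 : [ffun=> set0] \in [pred X : assignment | feasible X].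
  by rewrite inE; apply/feasibleP => i C _; rewrite ffunE set0I cards0.
have [M feasM M_max] := exists_argmax (fun X => social G (profile_of X)) feas0.
exists (exclusive_core M); split; rewrite ?exclusive_coreP ?feasible_exclusive_core //.
move=> Y feasY; apply: le_trans (M_max Y feasY) _; apply: social_le => w.
by rewrite !finders_profile_of; apply: load_exclusive_core.
Qed.

(* The [+ 1] makes the weight grow even when a location of gain [0] is added. *)
Definition weight X := \sum_i \sum_(w in X i) (gain i 1 w + 1).

Definition saturated X := forall i C w, C \in part G i -> w \in C -> load X w = 0%N ->
  #|X i :&: C| = cap G i /\ forall o, o \in X i :&: C -> gain i 1 w <= gain i 1 o.

Section WeightMaximal.
Variable O : assignment.
Hypotheses (O_feasible : feasible O) (O_exclusive : exclusive O).
Hypothesis O_max : forall Y, feasible Y -> exclusive Y ->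
  social G (profile_of O) <= social G (profile_of Y) -> weight Y <= weight O.

Lemma weight_max_full i C w : C \in part G i -> w \in C -> load O w = 0%N ->
  #|O i :&: C| = cap G i.
Proof.
move=> CP wC /eqP/load0P wO; apply/eqP; rewrite eqn_leq (feasibleP _ O_feasible) //=.
rewrite leqNgt; apply/negP => lt_cap.
pose Y := reassign O i (w |: O i).
have feasY : feasible Y.
  apply: feasible_reassign => // C' C'P; have [wC' | wC'] := boolP (w \in C').
    rewrite -(part_inj CP C'P wC wC') setIUl (setIidPl _) ?sub1set // cardsU1.
    by rewrite inE (negbTE (wO i)).
  have -> : (w |: O i) :&: C' = O i :&: C'.
    by apply/setP => x; rewrite !inE; have [->|] := eqVneq x w; rewrite /= ?(negbTE wC') ?andbF.
  exact: (feasibleP _ O_feasible).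
have exclY : exclusive Y.
  apply: exclusive_reassign => // x /setU1P[-> | xO]; last by left.
  by right; apply/eqP/load0P.
have le_social : social G (profile_of O) <= social G (profile_of Y).
  apply: social_le => x; rewrite !finders_profile_of load_reassign (load_others O i).
  by rewrite !inE; case: (x \in O i); case: (x == w); rewrite /=; lia.
have := O_max feasY exclY le_social.
rewrite /weight sum_reassign big_setU1 ?wO //=.
by have := gain_ge0 i w (ltnSn 0); lra.
Qed.

Lemma weight_max_gain_le i C w o : ordinally_consistent G -> C \in part G i -> w \in C ->
  load O w = 0%N -> o \in O i :&: C -> gain i 1 w <= gain i 1 o.
Proof.
move=> OC CP wC load_w /setIP[oO oC]; have /load0P wO := introT eqP load_w.
rewrite leNgt; apply/negP => lt_gain.
have ow : o != w by apply: contraNneq (wO i) => <-.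
have wOo : w \notin O i :\ o by rewrite inE (negbTE (wO i)) andbF.
pose Y := reassign O i (w |: (O i :\ o)).
have feasY : feasible Y.
  apply: feasible_reassign => // C' C'P; apply: leq_trans (feasibleP _ O_feasible i C' C'P).
  have [wC' | wC'] := boolP (w \in C').
    rewrite -(part_inj CP C'P wC wC') setIUl setIDAC (setIidPl _) ?sub1set // cardsU1.
    by rewrite !inE (negbTE (wO i)) andbF /= [X in (_ <= X)%N](cardsD1 o) !inE oO oC.
  apply: subset_leq_card; apply/subsetP => x /setIP[/setU1P[-> | /setD1P[_ xO]] xC'].
    by case/negP: wC'.
  by rewrite inE xO.
have exclY : exclusive Y.
  apply: exclusive_reassign => // x /setU1P[-> | /setD1P[_ xO]]; last by left.
  by right.
have coveredY : covered Y = w |: (covered O :\ o).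
  apply/setP => x; rewrite !inE load_reassign (load_others O i) !inE.
  have [_ | _] := eqVneq x w; first by rewrite /= addn1.
  have [-> | _] := eqVneq x o; last by [].
  by rewrite (exclusive_others O_exclusive oO).
have le_social : social G (profile_of O) <= social G (profile_of Y).
  have oCov : o \in covered O by rewrite inE (load_others O i) oO addn1.
  have wCov : w \notin covered O :\ o by rewrite !inE load_w andbF.
  rewrite !social_profile_of coveredY (big_setU1 _ wCov) (big_setD1 o oCov) /=.
  by have := OC i C CP o w oC wC lt_gain; lra.
have := O_max feasY exclY le_social.
by rewrite /weight sum_reassign big_setU1 // (big_setD1 o oO) /=; lra.
Qed.
End WeightMaximal.

Lemma exists_saturated_optimal : ordinally_consistent G -> exists O, [/\ feasible O,
  exclusive O, forall Y, feasible Y -> social G (profile_of Y) <= social G (profile_of O)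
  & saturated O].
Proof.
move=> OC; have [M [feasM exclM M_opt]] := exists_optimal_exclusive.
pose good := [pred X | [&& feasible X, exclusive X &
                          social G (profile_of M) <= social G (profile_of X)]].
have goodM : M \in good by rewrite inE feasM exclM lexx.
have [O /and3P[feasO exclO le_MO] O_max] := exists_argmax weight goodM.
have O_max' Y : feasible Y -> exclusive Y ->
    social G (profile_of O) <= social G (profile_of Y) -> weight Y <= weight O.
  by move=> feasY exclY le_OY; apply: O_max; rewrite inE feasY exclY (le_trans le_MO le_OY).
exists O; split=> // [Y feasY | i C w CP wC load_w].
  exact: le_trans (M_opt Y feasY) le_MO.
split; first exact: (weight_max_full feasO exclO O_max' CP wC load_w).
by move=> o oOC; apply: (weight_max_gain_le feasO exclO O_max' OC CP wC load_w oOC).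
Qed.

Lemma capped_NE_saturated O : solitary_search_dominant G -> feasible O -> exclusive O ->
  saturated O -> capped_NE (fun i C => #|O i :&: C|) O.
Proof.
move=> ssd feasO exclO satO i C CP.
have worth_in w : w \in O i :&: C -> worth O i w = gain i 1 w.
  by case/setIP => wO _; rewrite /worth exclusive_others.
split=> //; first exact: subsetIr.
- move=> w w' wOC /setDP[w'C w'OC]; rewrite (worth_in w wOC); have [_ wC] := setIP wOC.
  have w'O : w' \notin O i by apply: contra w'OC => w'O; rewrite inE w'O.
  rewrite /worth; case others_w': (others O i w') => [|m].
    have load_w' : load O w' = 0%N by rewrite (load_others O i) others_w' (negbTE w'O).
    by have [_] := satO i C w' CP w'C load_w'; apply.
  by apply: le_trans (solitary_gain ssd CP wC w'C).1; apply: gain_antimono.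
- move=> w wOC; rewrite worth_in //; have [_ wC] := setIP wOC.
  apply: le_trans (solitary_gain ssd CP wC wC).2; apply: (marg_cost_mono CP (leqnn _)).
    by apply/card_gt0P; exists w.
  by rewrite leqnn andbT (feasibleP _ feasO).
- by rewrite ltnn.
Qed.
End SearchGame.

Unset Implicit Arguments.

Theorem theorem1 (R : realFieldType) (I Omega : finType)
  (G : searchGame R I Omega) :
  ordinally_consistent G -> solitary_search_dominant G ->
  exists s : profile I Omega, is_pure_NE G s /\ socially_optimal G s.
Proof.
move=> OC ssd; have [O [feasO exclO O_opt satO]] := exists_saturated_optimal OC.
have O_below : below_cap G (fun i C => #|O i :&: C|) by apply/feasibleP.
have [X [NE le_OX]] := capped_NE_raise O_below (capped_NE_saturated ssd feasO exclO satO).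
have NE_X := is_pure_NE_profile_of NE.
exists (profile_of X); split=> //; split=> [|t valid_t]; first by case: NE_X.
have le_tO : social G t <= social G (profile_of O).
  apply: le_trans (O_opt _ (feasible_assignment_of valid_t)).
  by apply: social_le => w; rewrite finders_profile_of finders_assignment_of.
apply: le_trans le_tO (social_le _) => w; rewrite !finders_profile_of => load_O_pos.
exact: leq_trans load_O_pos (le_OX w).
Qed.
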